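(* Let $k\ge1$ be an integer and let $p=p(n)$ satisfy \[2\frac{\log(n)+\omega(n)}{n}\le p\le 1-(k+1)\frac{\log(n)+\omega(n)}{n}\] for some sequence $\omega(n)\to\infty$. Let $F(x,y)=x^{k+1}\big(y+(1-y)^{k+1}\big)^{x-k-1}$. Then $\lim_{n\to\infty}F(n,p(n))=0$.
   Context: $\log$ is the natural logarithm. *)

From Stdlib Require Import Reals ZArith.
From Coquelicot Require Import Coquelicot.
Open Scope R_scope.

(* F(x,y) = x^(k+1) * (y + (1-y)^(k+1))^(x-k-1), evaluated at a natural x = n;
   the exponent x-k-1 is an integer (possibly negative for small n). *)
Definition F (k : nat) (x : nat) (y : R) : R :=
  INR x ^ (k + 1) * powerRZ (y + (1 - y) ^ (k + 1)) (Z.of_nat x - Z.of_nat k - 1)%Z.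

From Stdlib Require Import Reals ZArith Lra Lia.
From Coquelicot Require Import Coquelicot.
Open Scope R_scope.

(* With q = 1 - p and h = q - q^(k+1) we have F(n, p) <= n^(k+1) exp(-(n-k-1) h).  The
   window for p puts q in [a, 1 - 2a/(k+1)] with a = (k+1)(log n + w)/n, and there
   h >= a - 2a^2, so the exponent is at most -(k+1) w plus an error of order
   (log n + w)^2 / n.  Shrinking w only widens the window, so we may replace omega by
   min(omega, log n), which still tends to infinity and keeps that error bounded. *)

Lemma exp_le_exp (x y : R) : x <= y -> exp x <= exp y.
Proof.
  intros hxy. destruct (Rle_lt_or_eq_dec _ _ hxy) as [hlt | ->].
  - left. now apply exp_increasing.
  - right. reflexivity.
Qed.

Lemma exp_mul_INR (m : nat) (y : R) : exp (INR m * y) = exp y ^ m.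
Proof.
  induction m as [|m IH].
  - simpl. now rewrite Rmult_0_l, exp_0.
  - rewrite S_INR, Rmult_plus_distr_r, Rmult_1_l, exp_plus, IH. simpl. ring.
Qed.

Lemma ln_sqr_le (x : R) : 1 <= x -> ln x * ln x <= 4 * x.
Proof.
  intros hx.
  assert (hl : 0 <= ln x) by (rewrite <- ln_1; apply ln_le; lra).
  assert (hexp : exp (ln x / 2) * exp (ln x / 2) = x).
  { rewrite <- exp_plus. replace (ln x / 2 + ln x / 2) with (ln x) by field.
    apply exp_ln. lra. }
  pose proof (exp_ineq1_le (ln x / 2)). nra.
Qed.

Lemma bernoulli_pow_le (q : R) (k : nat) : 0 <= q <= 1 -> q ^ k * (1 + INR k * (1 - q)) <= 1.
Proof.
  intros hq. induction k as [|k IH].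
  - simpl. lra.
  - rewrite S_INR. simpl.
    assert (0 <= q ^ k) by (apply pow_le; lra).
    assert (0 <= INR k) by apply pos_INR.
    assert (0 <= q ^ k * ((1 - q) * (1 - q) * (INR k + 1))).
    { apply Rmult_le_pos; [lra|]. apply Rmult_le_pos; nra. }
    nra.
Qed.

(* For q <= 1 - a the gap dominates q (1 - q) >= a (1 - a); for q > 1 - a Bernoulli's
   inequality gives 1 - q^k >= a / (1 + a). *)
Lemma pow_gap_lower_bound (k : nat) (a q : R) : (1 <= k)%nat ->
  0 <= a -> a <= q -> a <= INR k * (1 - q) -> a - 2 * a ^ 2 <= q - q ^ (k + 1).
Proof.
  intros hk ha haq hak.
  assert (hK : 1 <= INR k) by (apply (le_INR 1); lia).
  assert (hq1 : q <= 1) by nra.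
  assert (hqk0 : 0 <= q ^ k) by (apply pow_le; lra).
  replace (q ^ (k + 1)) with (q * q ^ k) by (rewrite Nat.add_comm; reflexivity).
  destruct (Rle_dec q (1 - a)) as [hq | hq].
  - assert (hqk : q ^ k <= q).
    { replace k with (S (k - 1)) by lia. simpl.
      assert (q ^ (k - 1) <= 1) by (rewrite <- (pow1 (k - 1)); apply pow_incr; lra).
      nra. }
    nra.
  - pose proof (bernoulli_pow_le q k ltac:(lra)) as hbern.
    assert (hgap : a <= (1 + a) * (1 - q ^ k)) by nra.
    assert (0 <= a * a * a) by (apply Rmult_le_pos; nra).
    nra.
Qed.

Lemma F_le_exp (k n : nat) (P : R) : (k + 1 <= n)%nat -> 0 <= P <= 1 ->
  0 <= F k n P <=
  exp (INR (k + 1) * ln (INR n) - INR (n - k - 1) * ((1 - P) - (1 - P) ^ (k + 1))).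
Proof.
  intros hn hP.
  set (h := (1 - P) - (1 - P) ^ (k + 1)).
  assert (hbase : P + (1 - P) ^ (k + 1) = 1 - h) by (unfold h; ring).
  assert (hbase0 : 0 <= 1 - h) by (rewrite <- hbase; pose proof (pow_le (1 - P) (k + 1)); lra).
  assert (hx : 0 < INR n) by (apply lt_0_INR; lia).
  unfold F.
  replace (Z.of_nat n - Z.of_nat k - 1)%Z with (Z.of_nat (n - k - 1)) by lia.
  rewrite <- pow_powerRZ, hbase.
  assert (hxpow : INR n ^ (k + 1) = exp (INR (k + 1) * ln (INR n))).
  { rewrite <- ln_pow by exact hx. symmetry. apply exp_ln. now apply pow_lt. }
  assert (hpow : (1 - h) ^ (n - k - 1) <= exp (INR (n - k - 1) * - h)).
  { rewrite exp_mul_INR. apply pow_incr. pose proof (exp_ineq1_le (- h)). lra. }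
  rewrite hxpow.
  replace (INR (k + 1) * ln (INR n) - INR (n - k - 1) * h)
    with (INR (k + 1) * ln (INR n) + INR (n - k - 1) * - h) by ring.
  rewrite exp_plus.
  split.
  - apply Rmult_le_pos; [left; apply exp_pos | now apply pow_le].
  - apply Rmult_le_compat_l; [left; apply exp_pos | exact hpow].
Qed.

(* The constant 49 collects the error terms (L + 2 L^2) / x <= 49, where L = l + w <= 2 l
   and l^2 <= 4 x. *)
Lemma F_exponent_le (K1 x l w h : R) : 0 < K1 <= x -> 1 <= x -> 0 <= w <= l ->
  l * l <= 4 * x ->
  K1 * (l + w) / x - 2 * (K1 * (l + w) / x) ^ 2 <= h ->
  K1 * l - (x - K1) * h <= 49 * K1 ^ 2 - K1 * w.
Proof.
  intros hK1 hx hw hl2 hh.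
  set (L := l + w) in *.
  set (a := K1 * L / x) in *.
  assert (hax : a * x = K1 * L) by (unfold a; field; lra).
  assert (hL : L + 2 * (L * L) <= 49 * x) by (unfold L; nra).
  assert (herr : K1 * a + 2 * a * (K1 * L) <= 49 * K1 ^ 2).
  { apply Rmult_le_reg_r with x; [lra|].
    replace ((K1 * a + 2 * a * (K1 * L)) * x) with (K1 * (a * x) + 2 * (K1 * L) * (a * x))
      by ring.
    rewrite hax.
    assert (0 <= K1 ^ 2) by (apply pow_le; lra). nra. }
  assert (hmain : (x - K1) * (a - 2 * a ^ 2) <= (x - K1) * h)
    by (apply Rmult_le_compat_l; lra).
  assert (0 <= K1 * a ^ 2) by (apply Rmult_le_pos; [lra | apply pow2_ge_0]).
  assert (hexpand : (x - K1) * (a - 2 * a ^ 2)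
                    = K1 * L - K1 * a - 2 * a * (K1 * L) + 2 * (K1 * a ^ 2))
    by (rewrite <- hax; ring).
  unfold L in *. nra.
Qed.

Definition in_window (k n : nat) (w P : R) : Prop :=
  2 * (ln (INR n) + w) / INR n <= P /\ P <= 1 - INR (k + 1) * (ln (INR n) + w) / INR n.

Lemma in_window_antitone (k n : nat) (v w P : R) : (0 < n)%nat -> v <= w ->
  in_window k n w P -> in_window k n v P.
Proof.
  intros hn hvw [hlo hhi].
  assert (hx : 0 < INR n) by now apply lt_0_INR.
  assert (hK1 : 0 <= INR (k + 1)) by apply pos_INR.
  split.
  - apply Rle_trans with (2 := hlo).
    apply Rmult_le_compat_r; [left; now apply Rinv_0_lt_compat | lra].
  - apply Rle_trans with (1 := hhi). apply Rplus_le_compat_l, Ropp_le_contravar.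
    apply Rmult_le_compat_r; [left; now apply Rinv_0_lt_compat | nra].
Qed.

Lemma F_le_exp_in_window (k n : nat) (w P : R) : (1 <= k)%nat -> (k + 1 <= n)%nat ->
  0 <= w <= ln (INR n) -> in_window k n w P ->
  0 <= F k n P <= exp (49 * INR (k + 1) ^ 2 - INR (k + 1) * w).
Proof.
  intros hk hn hw [hlo hhi].
  assert (hK : 1 <= INR k) by (apply (le_INR 1); lia).
  assert (hK1 : INR (k + 1) = INR k + 1) by (rewrite plus_INR; reflexivity).
  assert (hK1x : INR (k + 1) <= INR n) by (apply le_INR; lia).
  assert (hm : INR (n - k - 1) = INR n - INR (k + 1)).
  { replace (n - k - 1)%nat with (n - (k + 1))%nat by lia. apply minus_INR. exact hn. }
  set (x := INR n) in *. set (l := ln x) in *. set (K1 := INR (k + 1)) in *.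
  assert (hx : 1 <= x) by lra.
  assert (hl : 0 <= l) by (unfold l; rewrite <- ln_1; apply ln_le; lra).
  set (a := K1 * (l + w) / x) in *.
  assert (ha0 : 0 <= a) by (unfold a; apply Rdiv_le_0_compat; nra).
  assert (hb0 : 0 <= 2 * (l + w) / x) by (apply Rdiv_le_0_compat; lra).
  assert (hak : a <= INR k * P).
  { apply Rle_trans with (INR k * (2 * (l + w) / x)); [|apply Rmult_le_compat_l; lra].
    unfold a. unfold Rdiv. rewrite hK1, <- Rmult_assoc, <- (Rmult_assoc (INR k)).
    apply Rmult_le_compat_r; [left; apply Rinv_0_lt_compat; lra | nra]. }
  assert (hgap := pow_gap_lower_bound k a (1 - P) hk ha0 ltac:(lra)
                    ltac:(replace (1 - (1 - P)) with P by ring; exact hak)).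
  destruct (F_le_exp k n P hn ltac:(lra)) as [hF0 hF1].
  split; [exact hF0|].
  apply Rle_trans with (1 := hF1), exp_le_exp.
  fold x l K1. rewrite hm.
  apply F_exponent_le; [lra | lra | lra | apply ln_sqr_le; lra | exact hgap].
Qed.

Lemma is_lim_seq_ln_INR : is_lim_seq (fun n => ln (INR n)) p_infty.
Proof. exact (filterlim_comp _ _ _ INR ln _ _ _ is_lim_seq_INR is_lim_ln_p). Qed.

Lemma is_lim_seq_Rmin_p_infty (u v : nat -> R) :
  is_lim_seq u p_infty -> is_lim_seq v p_infty ->
  is_lim_seq (fun n => Rmin (u n) (v n)) p_infty.
Proof.
  rewrite <- !is_lim_seq_spec. intros hu hv M.
  destruct (hu M) as [N1 h1], (hv M) as [N2 h2].
  exists (max N1 N2). intros n hn.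
  apply Rmin_glb_lt; [apply h1 | apply h2]; lia.
Qed.

Lemma is_lim_seq_exp_affine (C c : R) (w : nat -> R) : 0 < c ->
  is_lim_seq w p_infty -> is_lim_seq (fun n => exp (C - c * w n)) 0.
Proof.
  intros hc hw.
  apply (filterlim_comp _ _ _ (fun n => C - c * w n) exp _ (Rbar_locally m_infty));
    [|exact is_lim_exp_m].
  apply is_lim_seq_spec. intros M.
  apply is_lim_seq_spec in hw. destruct (hw ((C - M) / c)) as [N hN].
  exists N. intros n hn. specialize (hN n hn).
  apply Rmult_lt_compat_l with (r := c) in hN; [|exact hc].
  replace (c * ((C - M) / c)) with (C - M) in hN by (field; lra).
  simpl. lra.
Qed.

Theorem lemma2p9 (k : nat) (hk : (1 <= k)%nat) (p omega : nat -> R)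
  (homega : is_lim_seq omega p_infty)
  (hp : exists N : nat, forall n : nat, (N <= n)%nat ->
      2 * (ln (INR n) + omega n) / INR n <= p n /\
      p n <= 1 - INR (k + 1) * (ln (INR n) + omega n) / INR n) :
  is_lim_seq (fun n : nat => F k n (p n)) 0.
Proof.
  set (w n := Rmin (omega n) (ln (INR n))).
  assert (hw : is_lim_seq w p_infty)
    by exact (is_lim_seq_Rmin_p_infty _ _ homega is_lim_seq_ln_INR).
  apply is_lim_seq_le_le_loc with
    (u := fun _ => 0) (w := fun n => exp (49 * INR (k + 1) ^ 2 - INR (k + 1) * w n)).
  - destruct hp as [N hN].
    destruct (proj2 (is_lim_seq_spec _ _) hw 0) as [N0 hN0].
    exists (max (max N N0) (k + 1)). intros n hn.
    apply F_le_exp_in_window; [exact hk | lia | |].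
    + split; [left; apply hN0; lia | apply Rmin_r].
    + apply in_window_antitone with (omega n); [lia | apply Rmin_l |].
      apply hN. lia.
  - apply is_lim_seq_const.
  - apply is_lim_seq_exp_affine; [apply lt_0_INR; lia | exact hw].
Qed.
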